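(* Let $L$ be a commutative C-loop and let $A$ be the subloop of $L$ generated by all associators $[x,y,z]$, $x,y,z\in L$. Then $a^2=e$ for every $a\in A$.
   Context: A C-loop is a loop satisfying $x(y(yz))=((xy)y)z$ for all $x,y,z$. The associator $[x,y,z]$ is the unique element $u$ with $(xy)z=(x(yz))u$. *)

Definition is_loop {T : Type} (mul : T -> T -> T) (e : T) : Prop :=
  (forall x, mul e x = x /\ mul x e = x) /\
  (forall a b, exists x, mul a x = b /\ forall x', mul a x' = b -> x' = x) /\
  (forall a b, exists y, mul y a = b /\ forall y', mul y' a = b -> y' = y).

Definition is_commutative {T : Type} (mul : T -> T -> T) : Prop :=
  forall x y, mul x y = mul y x.

Definition is_C_loop {T : Type} (mul : T -> T -> T) (e : T) : Prop :=
  is_loop mul e /\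
  forall x y z, mul x (mul y (mul y z)) = mul (mul (mul x y) y) z.

(* u is the associator [x,y,z]: the unique u with (xy)z = (x(yz))u
   (unique in a loop by left cancellation). *)
Definition is_associator {T : Type} (mul : T -> T -> T) (x y z u : T) : Prop :=
  mul (mul x y) z = mul (mul x (mul y z)) u.

Definition is_subloop {T : Type} (mul : T -> T -> T) (e : T) (S : T -> Prop) : Prop :=
  S e /\
  (forall a b, S a -> S b -> S (mul a b)) /\
  (forall a b x, S a -> S b -> mul a x = b -> S x) /\
  (forall a b y, S a -> S b -> mul y a = b -> S y).

Definition associator_subloop {T : Type} (mul : T -> T -> T) (e : T) (a : T) : Prop :=
  forall S : T -> Prop,
    is_subloop mul e S ->
    (forall x y z u, is_associator mul x y z u -> S u) ->
    S a.

From Corelib Require Import ssreflect.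

(* In a commutative C-loop every square y y lies in the nucleus and squaring
   is a homomorphism, (a b)(a b) = (a a)(b b).  Squaring the defining identity
   (x y) z = (x (y z)) u of an associator and reassociating the squares then
   cancels everything but u u, so u u = e.  Since squaring is a homomorphism,
   the elements of exponent 2 form a subloop, which therefore contains the
   subloop generated by the associators. *)

Section CommutativeCLoop.

Variables (T : Type) (mul : T -> T -> T) (e : T).
Hypothesis C_loop : is_C_loop mul e.
Hypothesis mulC : is_commutative mul.

Local Notation "x * y" := (mul x y).

Lemma mul1x x : e * x = x.
Proof. by case: C_loop => [[id _] _]; case: (id x). Qed.

Lemma mulx1 x : x * e = x.
Proof. by case: C_loop => [[id _] _]; case: (id x). Qed.

Lemma mulxA_C x y z : x * (y * (y * z)) = ((x * y) * y) * z.
Proof. by case: C_loop => _; apply. Qed.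

Lemma mulI x y z : x * y = x * z -> y = z.
Proof.
case: C_loop => [[_ [ldiv _]] _] Exz.
have [w [_ uniq_w]] := ldiv x (x * y).
by rewrite (uniq_w y) // (uniq_w z).
Qed.

Lemma mulIr x y z : y * x = z * x -> y = z.
Proof. by rewrite (mulC y) (mulC z); apply: mulI. Qed.

Lemma exists_inv y : exists y', y * y' = e.
Proof. by case: C_loop => [[_ [ldiv _]] _]; have [y' [yy' _]] := ldiv y e; exists y'. Qed.

Lemma mul_sqrA x y : (x * y) * y = x * (y * y).
Proof. by have := mulxA_C x y e; rewrite !mulx1. Qed.

Lemma mulK_inv {y y'} : y * y' = e -> forall w, (w * y) * y' = w.
Proof.
move=> yy' w; case: C_loop => [[_ [_ rdiv]] _].
have [x [<- _]] := rdiv y w.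
by have := mulxA_C x y y'; rewrite yy' mulx1.
Qed.

Lemma mulKV_inv {y y'} : y * y' = e -> forall w, y' * (y * w) = w.
Proof. by move=> yy' w; rewrite mulC (mulC y); apply: mulK_inv. Qed.

Lemma mul_inv_mul a a' b b' :
  a * a' = e -> b * b' = e -> (a * b) * (a' * b') = e.
Proof.
move=> aa' bb'; have [p' abp'] := exists_inv (a * b).
have a'_ab : a' * (a * b) = b by apply: mulKV_inv.
have bp' : b * p' = a' by rewrite -a'_ab; apply: mulK_inv.
have -> : a' * b' = p' by rewrite -bp' (mulC b p') (mulK_inv bb').
exact: abp'.
Qed.

Lemma sqr_mid_nuclear x y z : (x * (y * y)) * z = x * ((y * y) * z).
Proof.
have := mulxA_C x y z; rewrite mul_sqrA.
by rewrite (mulC y z) (mulC y (z * y)) mul_sqrA (mulC z).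
Qed.

Lemma sqr_conj_inv y w w' z :
  w * w' = e -> (w' * (y * y)) * (w * z) = (y * y) * z.
Proof.
move=> ww'; have [y' yy'] := exists_inv y.
have n'n : (y' * y') * (y * y) = e by rewrite mulC; apply: mul_inv_mul.
have wn' : w * (y' * y') * (w' * (y * y)) = e by apply: mul_inv_mul.
rewrite -(mulKV_inv wn' ((y * y) * z)) -sqr_mid_nuclear.
by rewrite (mulK_inv n'n).
Qed.

Lemma sqr_left_nuclear y x z : ((y * y) * x) * z = (y * y) * (x * z).
Proof.
have [x' xx'] := exists_inv x.
rewrite (mulC _ x) -(sqr_conj_inv y x' x (x * z)) ?(mulKV_inv xx') //.
by rewrite mulC.
Qed.

Lemma sqr_mul a b : (a * b) * (a * b) = (a * a) * (b * b).
Proof.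
apply: (mulIr a); rewrite (mulC _ a) -mul_sqrA.
have -> : a * (a * b) = (a * a) * b by rewrite (mulC a) (mulC a b) mul_sqrA mulC.
rewrite sqr_left_nuclear (mulC b) mul_sqrA.
by rewrite sqr_left_nuclear (mulC (b * b) a).
Qed.

Lemma involutions_subloop : is_subloop mul e (fun a => a * a = e).
Proof.
split; first exact: mul1x.
split; [|split].
- by move=> a b aa bb; rewrite sqr_mul aa bb mul1x.
- by move=> a b x aa + ax; rewrite -ax sqr_mul aa mul1x.
- by move=> a b x aa + xa; rewrite -xa sqr_mul aa mulx1.
Qed.

Lemma associator_sqr x y z u : is_associator mul x y z u -> u * u = e.
Proof.
rewrite /is_associator => assoc_u.
have := sqr_mul (x * (y * z)) u; rewrite -assoc_u !sqr_mul sqr_left_nuclear.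
by rewrite -{1}(mulx1 (x * x * (y * y * (z * z)))) => /mulI.
Qed.

End CommutativeCLoop.

Theorem corollary5p3 (T : Type) (mul : T -> T -> T) (e : T) :
  is_C_loop mul e ->
  is_commutative mul ->
  forall a : T, associator_subloop mul e a -> mul a a = e.
Proof.
move=> C_loop mulC a gen_a; apply: (gen_a (fun a => mul a a = e)).
- exact: involutions_subloop.
- exact: associator_sqr.
Qed.
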